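(* There exists a unique $\tau_c\in(\tau_1^i,+\infty)$ such that $$p'(\tau_1^i)=\frac{2h(\tau_c)-2h(\tau_1^i)}{\tau_c^2-(\tau_1^i)^2}<p'(\tau_c).$$ Moreover, $\tau_c>\tau_2^a$ and $$p'(\tau_1^i)>\frac{2h(\tau)-2h(\tau_1^i)}{\tau^2-(\tau_1^i)^2}\quad\text{for all }\tau\in(\tau_1^i,\tau_c).$$
   Context: The pressure is $p(\tau)=\frac{\mathcal S}{(\tau-1)^\gamma}-\frac{1}{\tau^2}$ for $\tau>1$, with constants $1<\gamma<2$ and $\mathcal S>0$, assumed such that there exist $1<\tau_1^i<\tau_2^i$ with $p'(\tau)<0$ for $\tau>1$, $p''>0$ on $(1,\tau_1^i)\cup(\tau_2^i,+\infty)$, and $p''<0$ on $(\tau_1^i,\tau_2^i)$. The function $h$ (specific enthalpy) satisfies $h'(\tau)=\tau p'(\tau)$. $\tau_2^a>\tau_2^i$ denotes the point with $p'(\tau_2^a)=p'(\tau_1^i)$. *)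

From Stdlib Require Import Reals.
From Coquelicot Require Import Coquelicot.
Open Scope R_scope.

(* The pressure p(tau) = S / (tau - 1)^gamma - 1 / tau^2  (meaningful for tau > 1). *)
Definition pres (S gam : R) (tau : R) : R :=
  S / Rpower (tau - 1) gam - 1 / tau ^ 2.

Definition dpres (S gam : R) : R -> R := Derive (pres S gam).
Definition ddpres (S gam : R) : R -> R := Derive (dpres S gam).

Definition chord (h : R -> R) (t1 tau : R) : R :=
  (2 * h tau - 2 * h t1) / (tau ^ 2 - t1 ^ 2).

From Stdlib Require Import Reals Lra.
From Coquelicot Require Import Coquelicot.
Open Scope R_scope.

(* Write f = p' and g t = 2 h t - 2 h t1 - f t1 (t^2 - t1^2), so that
   chord h t1 t = f t1 + g t / (t^2 - t1^2) and g' t = 2 t (f t - f t1).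
   The sign pattern of p'' makes f fall below f t1 on (t1, t2a) and rise above it
   beyond t2a, so g decreases from g t1 = 0 down to g t2a < 0 and then increases.
   Since p' tends to 0 > p' t1 at infinity, g' is eventually bounded below by a
   positive constant, so g becomes positive: its unique zero tc > t1 lies beyond
   t2a, where f tc > f t1. *)

Lemma derive_neg_lt (F F' : R -> R) (a b : R) : a < b ->
  (forall x, a <= x <= b -> is_derive F x (F' x)) ->
  (forall x, a < x < b -> F' x < 0) -> F b < F a.
Proof.
  intros Hab HF HF'.
  destruct (MVT_cor2 F F' a b Hab) as [c [Hc Hcab]].
  { intros x Hx. apply is_derive_Reals, HF, Hx. }
  specialize (HF' c Hcab). nra.
Qed.

Lemma derive_pos_lt (F F' : R -> R) (a b : R) : a < b ->
  (forall x, a <= x <= b -> is_derive F x (F' x)) ->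
  (forall x, a < x < b -> 0 < F' x) -> F a < F b.
Proof.
  intros Hab HF HF'.
  apply Ropp_lt_cancel, (derive_neg_lt (fun x => - F x) (fun x => - F' x)); [exact Hab| |].
  - intros x Hx. apply (is_derive_opp F), HF, Hx.
  - intros x Hx. specialize (HF' x Hx). lra.
Qed.

Lemma eventually_gt (a : R) : Rbar_locally p_infty (fun x => a < x).
Proof. exists a. now intros x Hx. Qed.

Lemma eventually_pos_of_derive_ge (F F' : R -> R) (k : R) : 0 < k ->
  Rbar_locally p_infty (fun x => is_derive F x (F' x) /\ k <= F' x) ->
  Rbar_locally p_infty (fun x => 0 < F x).
Proof.
  intros Hk [M HM].
  exists (M + 1 + (Rabs (F (M + 1)) + 1) / k). intros x Hx.
  assert (Hgap : Rabs (F (M + 1)) + 1 <= k * (x - (M + 1))).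
  { apply (Rmult_lt_compat_l k) in Hx; [|exact Hk].
    replace (k * (M + 1 + (Rabs (F (M + 1)) + 1) / k)) with
      (k * (M + 1) + (Rabs (F (M + 1)) + 1)) in Hx by (field; lra).
    lra. }
  destruct (MVT_cor2 F F' (M + 1) x) as [c [Hc Hcx]].
  { pose proof (Rabs_pos (F (M + 1))). nra. }
  { intros y Hy. apply is_derive_Reals, HM. lra. }
  assert (HF'c : k <= F' c) by (apply HM; lra).
  pose proof (Rle_abs (- F (M + 1))). rewrite Rabs_Ropp in *. nra.
Qed.

Section Valley.

Variables (F F' : R -> R) (a b : R).
Hypothesis Hab : a < b.
Hypothesis HF : forall x, a <= x -> is_derive F x (F' x).
Hypothesis HF'_neg : forall x, a < x < b -> F' x < 0.
Hypothesis HF'_pos : forall x, b < x -> 0 < F' x.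

Lemma valley_decr (x y : R) : a <= x < y -> y <= b -> F y < F x.
Proof.
  intros Hxy Hyb. apply (derive_neg_lt F F'); [lra| |].
  - intros z Hz. apply HF. lra.
  - intros z Hz. apply HF'_neg. lra.
Qed.

Lemma valley_incr (x y : R) : b <= x < y -> F x < F y.
Proof.
  intros Hxy. apply (derive_pos_lt F F'); [lra| |].
  - intros z Hz. apply HF. lra.
  - intros z Hz. apply HF'_pos. lra.
Qed.

Lemma valley_below_level (c x : R) : b < c -> F c = F a -> a < x < c -> F x < F a.
Proof.
  intros Hbc Hc Hx. destruct (Rle_or_lt x b).
  - apply valley_decr; lra.
  - rewrite <- Hc. apply valley_incr; lra.
Qed.

Lemma valley_above_level (c x : R) : b < c -> F c = F a -> c < x -> F a < F x.
Proof. intros Hbc Hc Hx. rewrite <- Hc. apply valley_incr; lra. Qed.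

Hypothesis HFa : F a = 0.
Hypothesis HF_eventually_pos : Rbar_locally p_infty (fun x => 0 < F x).

Lemma valley_neg (x : R) : a < x <= b -> F x < 0.
Proof. intros Hx. rewrite <- HFa. apply valley_decr; lra. Qed.

Lemma valley_unique_root : exists c, b < c /\ F c = 0 /\
  (forall x, a < x -> F x = 0 -> x = c) /\ (forall x, a < x < c -> F x < 0).
Proof.
  destruct (filter_ex _ (filter_and _ _ (eventually_gt b) HF_eventually_pos))
    as [T [HbT HFT]].
  assert (HFb : F b < 0) by (apply valley_neg; lra).
  destruct (Ranalysis5.IVT_interv F b T) as [c [Hc HFc]]; try easy.
  { intros x Hx. apply derivable_continuous_pt.
    exists (F' x). apply is_derive_Reals, HF. lra. }
  assert (Hbc : b < c).
  { destruct (proj1 Hc) as [Hlt | Heq]; [exact Hlt|]. subst c. lra. }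
  exists c. repeat split; [exact Hbc | exact HFc | |].
  - intros x Hx HFx.
    destruct (Rle_or_lt x b) as [Hxb | Hbx].
    { pose proof (valley_neg x (conj Hx Hxb)). lra. }
    destruct (Rtotal_order x c) as [Hxc | [Hxc | Hcx]]; [| exact Hxc |].
    + pose proof (valley_incr x c (conj (Rlt_le _ _ Hbx) Hxc)). lra.
    + pose proof (valley_incr c x (conj (Rlt_le _ _ Hbc) Hcx)). lra.
  - intros x Hx. destruct (Rle_or_lt x b) as [Hxb | Hbx].
    + apply valley_neg. lra.
    + rewrite <- HFc. apply valley_incr. lra.
Qed.

End Valley.

Definition chord_gap (h : R -> R) (t1 s t : R) : R :=
  2 * h t - 2 * h t1 - s * (t ^ 2 - t1 ^ 2).

Lemma is_derive_chord_gap (h : R -> R) (t1 s x q : R) :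
  is_derive h x (x * q) -> is_derive (chord_gap h t1 s) x (2 * x * (q - s)).
Proof.
  intros Hh. unfold chord_gap. auto_derive.
  - now exists (x * q).
  - replace (Derive (fun t => h t) x) with (x * q) by (symmetry; now apply is_derive_unique).
    ring.
Qed.

Lemma chordE (h : R -> R) (t1 s t : R) : 0 <= t1 < t ->
  chord h t1 t = s + chord_gap h t1 s t / (t ^ 2 - t1 ^ 2).
Proof.
  intros Ht. unfold chord, chord_gap. field. nra.
Qed.

Lemma chord_eq_iff (h : R -> R) (t1 s t : R) : 0 <= t1 < t ->
  chord h t1 t = s <-> chord_gap h t1 s t = 0.
Proof.
  intros Ht. rewrite (chordE h t1 s t Ht).
  assert (Hd : 0 < t ^ 2 - t1 ^ 2) by nra.
  split; intros Hgap.
  - apply (Rmult_eq_reg_r (/ (t ^ 2 - t1 ^ 2))); [|apply Rinv_neq_0_compat; lra].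
    unfold Rdiv in Hgap. lra.
  - rewrite Hgap. unfold Rdiv. ring.
Qed.

Lemma chord_lt_of_gap_neg (h : R -> R) (t1 s t : R) : 0 <= t1 < t ->
  chord_gap h t1 s t < 0 -> chord h t1 t < s.
Proof.
  intros Ht Hgap. rewrite (chordE h t1 s t Ht).
  assert (Hd : 0 < t ^ 2 - t1 ^ 2) by nra.
  assert (chord_gap h t1 s t / (t ^ 2 - t1 ^ 2) < 0).
  { apply Ropp_lt_cancel. rewrite Ropp_0, <- Rdiv_opp_l.
    apply Rdiv_lt_0_compat; lra. }
  lra.
Qed.

Definition dpres_formula (S gam x : R) : R :=
  - S * gam / ((x - 1) * Rpower (x - 1) gam) + 2 / x ^ 3.

Lemma is_derive_pres (S gam x : R) : 1 < x ->
  is_derive (pres S gam) x (dpres_formula S gam x).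
Proof.
  intros Hx. unfold pres, dpres_formula, Rpower.
  assert (HE : 0 < exp (gam * ln (x - 1))) by apply exp_pos.
  replace (x - 1) with (x + - (1)) in * by ring.
  auto_derive.
  - repeat split; try lra; apply Rgt_not_eq; nra.
  - field. repeat split; apply Rgt_not_eq; lra.
Qed.

Lemma dpresE (S gam x : R) : 1 < x -> dpres S gam x = dpres_formula S gam x.
Proof. intros Hx. apply is_derive_unique, is_derive_pres, Hx. Qed.

Lemma is_derive_dpres (S gam x : R) : 1 < x ->
  is_derive (dpres S gam) x (ddpres S gam x).
Proof.
  intros Hx. apply Derive_correct.
  assert (Hformula : ex_derive (dpres_formula S gam) x).
  { unfold dpres_formula, Rpower.
    assert (HE : 0 < exp (gam * ln (x - 1))) by apply exp_pos.
    replace (x - 1) with (x + - (1)) in * by ring.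
    auto_derive. repeat split; try lra; apply Rgt_not_eq;
      repeat apply Rmult_lt_0_compat; lra. }
  apply (ex_derive_ext_loc (dpres_formula S gam)); [|exact Hformula].
  exists (mkposreal (x - 1) ltac:(lra)). intros y Hy.
  apply Rabs_lt_between' in Hy. simpl in Hy.
  symmetry. apply dpresE. lra.
Qed.

Lemma dpres_eventually_ge (S gam eps : R) : 0 <= S -> 0 <= gam -> 0 < eps ->
  Rbar_locally p_infty (fun x => - eps <= dpres S gam x).
Proof.
  intros HS Hgam Heps. exists (Rmax 2 (1 + S * gam / eps)). intros x Hx.
  pose proof (Rmax_l 2 (1 + S * gam / eps)) as Hx2.
  pose proof (Rmax_r 2 (1 + S * gam / eps)) as HxM.
  rewrite dpresE by lra. unfold dpres_formula.
  assert (HE : 1 <= Rpower (x - 1) gam).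
  { rewrite <- (Rpower_O (x - 1) ltac:(lra)) at 1.
    apply Rle_Rpower; lra. }
  assert (Hlarge : S * gam <= eps * (x - 1)).
  { apply (Rmult_le_reg_r (/ eps)); [now apply Rinv_0_lt_compat|].
    replace (eps * (x - 1) * / eps) with (x - 1) by (field; lra).
    unfold Rdiv in HxM. lra. }
  assert (Hfirst : S * gam / ((x - 1) * Rpower (x - 1) gam) <= eps).
  { assert (0 < x - 1) by lra.
    apply Rle_div_l; [nra|].
    assert (0 <= eps * (x - 1) * (Rpower (x - 1) gam - 1)) by
      (apply Rmult_le_pos; [apply Rmult_le_pos|]; lra).
    nra. }
  assert (0 < 2 / x ^ 3) by (apply Rdiv_lt_0_compat; [lra | apply pow_lt; lra]).
  unfold Rdiv in *. lra.
Qed.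

Lemma chord_gap_eventually_pos (S gam t1 : R) (h : R -> R) :
  0 <= S -> 0 <= gam -> dpres S gam t1 < 0 ->
  (forall x, 1 < x -> is_derive h x (x * dpres S gam x)) ->
  Rbar_locally p_infty (fun x => 0 < chord_gap h t1 (dpres S gam t1) x).
Proof.
  intros HS Hgam Hf1 Hh.
  apply (eventually_pos_of_derive_ge _
    (fun x => 2 * x * (dpres S gam x - dpres S gam t1)) (- dpres S gam t1)); [lra|].
  generalize (filter_and _ _ (eventually_gt 1)
    (dpres_eventually_ge S gam (- dpres S gam t1 / 2) HS Hgam ltac:(lra))).
  apply filter_imp. intros x [Hx Hfx].
  split; [apply is_derive_chord_gap, Hh, Hx | nra].
Qed.

Theorem proposition3p1
  (S gam t1i t2i t2a : R) (h : R -> R)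
  (HS : 0 < S) (Hgam : 1 < gam < 2)
  (Ht : 1 < t1i < t2i)
  (Hp1 : forall tau, 1 < tau -> dpres S gam tau < 0)
  (Hp2a : forall tau, 1 < tau < t1i -> 0 < ddpres S gam tau)
  (Hp2b : forall tau, t2i < tau -> 0 < ddpres S gam tau)
  (Hp2c : forall tau, t1i < tau < t2i -> ddpres S gam tau < 0)
  (Hh : forall tau, 1 < tau -> is_derive h tau (tau * dpres S gam tau))
  (Ht2a : t2i < t2a) (Hp2a_eq : dpres S gam t2a = dpres S gam t1i) :
  exists tc : R,
    (t1i < tc /\ dpres S gam t1i = chord h t1i tc /\ chord h t1i tc < dpres S gam tc) /\
    (forall t, t1i < t ->
       dpres S gam t1i = chord h t1i t -> chord h t1i t < dpres S gam t -> t = tc) /\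
    t2a < tc /\
    (forall tau, t1i < tau < tc -> dpres S gam t1i > chord h t1i tau).
Proof.
  set (f := dpres S gam) in *.
  assert (Hf : forall x, t1i <= x -> is_derive f x (ddpres S gam x))
    by (intros x Hx; apply is_derive_dpres; lra).
  assert (Hf_below : forall t, t1i < t < t2a -> f t < f t1i)
    by (intros t; apply (valley_below_level f (ddpres S gam) t1i t2i); auto; lra).
  assert (Hf_above : forall t, t2a < t -> f t1i < f t)
    by (intros t; apply (valley_above_level f (ddpres S gam) t1i t2i); auto; lra).
  set (g := chord_gap h t1i (f t1i)).
  destruct (valley_unique_root g (fun x => 2 * x * (f x - f t1i)) t1i t2a)
    as [tc [Htc [Hgtc [Huniq Hneg]]]].
  - lra.
  - intros x Hx. apply is_derive_chord_gap, Hh. lra.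
  - intros x Hx. specialize (Hf_below x Hx). nra.
  - intros x Hx. specialize (Hf_above x Hx). nra.
  - unfold g, chord_gap. ring.
  - apply chord_gap_eventually_pos; [lra | lra | apply Hp1; lra | exact Hh].
  - exists tc.
    assert (Hchord : chord h t1i tc = f t1i) by (apply chord_eq_iff; [lra | exact Hgtc]).
    repeat split; try lra.
    + rewrite Hchord. apply Hf_above, Htc.
    + intros t Ht1 Heq _. apply Huniq; [exact Ht1|]. apply chord_eq_iff; lra.
    + intros tau Htau. apply Rlt_gt, chord_lt_of_gap_neg, Hneg; lra.
Qed.
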